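(* If $T\leq T'$ is derivable in the system of subtyping rules below extended with the reflexivity rule $T\leq T$ and the transitivity rule (from $T\leq T'$ and $T'\leq T''$ infer $T\leq T''$), then $T\leq T'$ is derivable using only the rules below.
   Context: Types: raw types $R ::= \alpha \mid S\rightarrow T$ ($\alpha$ ranging over atomic types), subsidiary types $S ::= \bigcap R$ (a finite formal intersection $R_1\cap\dots\cap R_n$, $n\geq 0$; the empty one is written $\omega$), types $T ::= \bigcup S$ (a finite formal union $S_1\cup\dots\cup S_n$, $n\ge 0$; the empty one is written $\mho$). Intersections and unions are taken modulo associativity and commutativity only (not idempotence); a raw type is identified with a one-element intersection and a subsidiary type with a one-element union. Subtyping rules ($S,S',S'',S_i$ subsidiary types; $T,T',T'',T_i$ types; $i$ over a finite, possibly empty, index set): $\alpha\leq\alpha$; from $S'\leq S$ and $T\leq T'$ infer $S\rightarrow T\leq S'\rightarrow T'$; from $S\leq S'$ infer $S\cap S''\leq S'$; from $S\leq S_i$ for all $i$ infer $S\leq\bigcap_i S_i$; from $T\leq T'$ infer $T\leq T''\cup T'$; from $T_i\leq T$ for all $i$ infer $\bigcup_i T_i\leq T$. *)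

From Stdlib Require Import List Permutation.
Import ListNotations.
Set Implicit Arguments.

(* Raw types R ::= alpha | S -> T, over an arbitrary type A of atoms.
   A subsidiary type S = finite formal intersection of raw types = list raw.
   A type T = finite formal union of subsidiary types = list (list raw). *)
Inductive raw (A : Type) : Type :=
| Atom : A -> raw A
| Arrow : list (raw A) -> list (list (raw A)) -> raw A.
Arguments Atom {A} _.
Arguments Arrow {A} _ _.

Definition subs (A : Type) := list (raw A).
Definition ty (A : Type) := list (subs A).

(* Identification modulo associativity and commutativity (not idempotence),
   at every depth: lists are equal up to permutation, componentwise. *)
Inductive raw_eqv {A : Type} : raw A -> raw A -> Prop :=
| req_atom a : raw_eqv (Atom a) (Atom a)
| req_arrow (S S0 S' : list (raw A)) (T T0 T' : list (list (raw A))) :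
    Permutation S S0 -> Forall2 raw_eqv S0 S' ->
    Permutation T T0 ->
    Forall2 (fun X Y => exists X0, Permutation X X0 /\ Forall2 raw_eqv X0 Y) T0 T' ->
    raw_eqv (Arrow S T) (Arrow S' T').

Definition subs_eqv {A : Type} (S S' : subs A) : Prop :=
  exists S0, Permutation S S0 /\ Forall2 raw_eqv S0 S'.

Definition ty_eqv {A : Type} (T T' : ty A) : Prop :=
  exists T0, Permutation T T0 /\ Forall2 subs_eqv T0 T'.

(* A raw type r is identified with the one-element intersection [r], and a
   subsidiary type S with the one-element union [S]; so the judgement is a
   single relation on types.  Intersection of subsidiary types and union of
   types are list concatenation.  [ext = true] adds reflexivity and
   transitivity; [ext = false] is the system of the listed rules only.
   Rule [sub_conv] expresses that types are taken modulo AC. *)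
Inductive sub {A : Type} (ext : bool) : ty A -> ty A -> Prop :=
| sub_atom (a : A) : sub ext [[Atom a]] [[Atom a]]
| sub_arrow (S S' : subs A) (T T' : ty A) :
    sub ext [S'] [S] -> sub ext T T' -> sub ext [[Arrow S T]] [[Arrow S' T']]
| sub_interL (S S' S'' : subs A) :
    sub ext [S] [S'] -> sub ext [S ++ S''] [S']
| sub_interR (S : subs A) (Ss : list (subs A)) :
    (forall Si, In Si Ss -> sub ext [S] [Si]) -> sub ext [S] [concat Ss]
| sub_unionR (T T' T'' : ty A) :
    sub ext T T' -> sub ext T (T'' ++ T')
| sub_unionL (Ts : list (ty A)) (T : ty A) :
    (forall Ti, In Ti Ts -> sub ext Ti T) -> sub ext (concat Ts) T
| sub_conv (T1 T1' T2 T2' : ty A) :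
    ty_eqv T1 T1' -> ty_eqv T2 T2' -> sub ext T1' T2' -> sub ext T1 T2
| sub_refl (T : ty A) : ext = true -> sub ext T T
| sub_trans (T T' T'' : ty A) :
    ext = true -> sub ext T T' -> sub ext T' T'' -> sub ext T T''.

(* Both systems are sound and complete for one structural preorder: a union T lies below T' iff each
   of its intersections lies below some intersection of T'; an intersection S lies below S' iff each
   raw component of S' lies above some raw component of S (the Hoare and Smyth liftings of an order
   to finite collections); arrows compare contravariantly in the domain and covariantly in the
   codomain.  This preorder is reflexive and transitive by induction
   on raw types, so derivations with reflexivity and transitivity can be replaced by derivations
   without them. *)
From Stdlib Require Import List Permutation.
Import ListNotations.

Section RawInd.
Variable A : Type.
Variable P : raw A -> Prop.
Hypothesis P_atom : forall a, P (Atom a).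
Hypothesis P_arrow : forall S T,
  (forall x, In x S -> P x) -> (forall X x, In X T -> In x X -> P x) -> P (Arrow S T).

Fixpoint raw_nested_ind (r : raw A) : P r :=
  let fix all_raw (l : list (raw A)) : Forall P l :=
    match l with
    | [] => Forall_nil _
    | x :: l' => Forall_cons _ (raw_nested_ind x) (all_raw l')
    end in
  let fix all_subs (L : list (list (raw A))) : Forall (Forall P) L :=
    match L with
    | [] => Forall_nil _
    | X :: L' => Forall_cons _ (all_raw X) (all_subs L')
    end in
  match r with
  | Atom a => P_atom a
  | Arrow dom cod =>
      P_arrow dom cod (proj1 (Forall_forall P dom) (all_raw dom))
        (fun X x HX Hx => proj1 (Forall_forall P X)
                            (proj1 (Forall_forall (Forall P) cod) (all_subs cod) X HX) x Hx)
  end.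
End RawInd.

Section Liftings.
Context {X Y : Type}.

Definition hoare (R : X -> Y -> Prop) (l : list X) (l' : list Y) : Prop :=
  forall x, In x l -> exists y, In y l' /\ R x y.

Definition smyth (R : X -> Y -> Prop) (l : list X) (l' : list Y) : Prop :=
  forall y, In y l' -> exists x, In x l /\ R x y.

Definition perm_Forall2 (R : X -> Y -> Prop) (l : list X) (l' : list Y) : Prop :=
  exists l0, Permutation l l0 /\ Forall2 R l0 l'.

Lemma Forall2_In_l {R : X -> Y -> Prop} {l l' x} :
  Forall2 R l l' -> In x l -> exists y, In y l' /\ R x y.
Proof.
  induction 1 as [|x0 y0 l l' Hxy _ IH]; simpl; [tauto|].
  intros [<-|Hx]; [eauto|]. destruct (IH Hx) as [y [Hy Hxy']]; eauto.
Qed.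

Lemma Forall2_In_r {R : X -> Y -> Prop} {l l' y} :
  Forall2 R l l' -> In y l' -> exists x, In x l /\ R x y.
Proof.
  induction 1 as [|x0 y0 l l' Hxy _ IH]; simpl; [tauto|].
  intros [<-|Hy]; [eauto|]. destruct (IH Hy) as [x [Hx Hxy']]; eauto.
Qed.

Lemma hoare_incl (R : X -> Y -> Prop) l l' l'' :
  incl l' l'' -> hoare R l l' -> hoare R l l''.
Proof.
  intros Hincl H x Hx. destruct (H x Hx) as [y [Hy Hxy]]. exists y; auto.
Qed.

Lemma hoare_concat_l (R : X -> Y -> Prop) ls l' :
  (forall l, In l ls -> hoare R l l') -> hoare R (concat ls) l'.
Proof.
  intros H x Hx. apply in_concat in Hx as [l [Hl Hx]]. exact (H l Hl x Hx).
Qed.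

Lemma smyth_incl (R : X -> Y -> Prop) l l' l'' :
  incl l l'' -> smyth R l l' -> smyth R l'' l'.
Proof.
  intros Hincl H y Hy. destruct (H y Hy) as [x [Hx Hxy]]. exists x; auto.
Qed.

Lemma smyth_concat_r (R : X -> Y -> Prop) l ls :
  (forall l', In l' ls -> smyth R l l') -> smyth R l (concat ls).
Proof.
  intros H y Hy. apply in_concat in Hy as [l' [Hl' Hy]]. exact (H l' Hl' y Hy).
Qed.

Lemma perm_Forall2_hoare (E R : X -> Y -> Prop) l l' :
  (forall x y, In x l -> E x y -> R x y) -> perm_Forall2 E l l' -> hoare R l l'.
Proof.
  intros HER [l0 [Hp HF]] x Hx.
  destruct (Forall2_In_l HF (Permutation_in _ Hp Hx)) as [y [Hy Hxy]]. eauto.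
Qed.

Lemma perm_Forall2_smyth (E R : X -> Y -> Prop) l l' :
  (forall x y, In x l -> E x y -> R x y) -> perm_Forall2 E l l' -> smyth R l l'.
Proof.
  intros HER [l0 [Hp HF]] y Hy.
  destruct (Forall2_In_r HF Hy) as [x [Hx Hxy]].
  apply (Permutation_in _ (Permutation_sym Hp)) in Hx. eauto.
Qed.
End Liftings.

Section Preorder.
Context {X : Type} {R : X -> X -> Prop}.

Lemma hoare_refl_in l : (forall x, In x l -> R x x) -> hoare R l l.
Proof. intros H x Hx; eauto. Qed.

Lemma smyth_refl_in l : (forall x, In x l -> R x x) -> smyth R l l.
Proof. intros H x Hx; eauto. Qed.

Lemma hoare_trans_in {l1 l2 l3} :
  (forall y, In y l2 -> forall x z, R x y -> R y z -> R x z) ->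
  hoare R l1 l2 -> hoare R l2 l3 -> hoare R l1 l3.
Proof.
  intros Htr H12 H23 x Hx.
  destruct (H12 x Hx) as [y [Hy Hxy]]. destruct (H23 y Hy) as [z [Hz Hyz]].
  eauto.
Qed.

Lemma smyth_trans_in {l1 l2 l3} :
  (forall y, In y l2 -> forall x z, R x y -> R y z -> R x z) ->
  smyth R l1 l2 -> smyth R l2 l3 -> smyth R l1 l3.
Proof.
  intros Htr H12 H23 z Hz.
  destruct (H23 z Hz) as [y [Hy Hyz]]. destruct (H12 y Hy) as [x [Hx Hxy]].
  eauto.
Qed.
End Preorder.

Lemma Forall2_refl_in {X} (R : X -> X -> Prop) l :
  (forall x, In x l -> R x x) -> Forall2 R l l.
Proof. induction l; simpl; auto. Qed.

Lemma concat_map_singleton {X} (l : list X) : concat (map (fun x => [x]) l) = l.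
Proof. induction l; simpl; congruence. Qed.

Section Subtyping.
Context {A : Type}.

Inductive le_raw : raw A -> raw A -> Prop :=
| le_raw_atom a : le_raw (Atom a) (Atom a)
| le_raw_arrow S T S' T' :
    smyth le_raw S' S -> hoare (smyth le_raw) T T' -> le_raw (Arrow S T) (Arrow S' T').

Definition le_subs : subs A -> subs A -> Prop := smyth le_raw.
Definition le_ty : ty A -> ty A -> Prop := hoare le_subs.

Lemma le_raw_refl r : le_raw r r.
Proof.
  induction r as [a|S T HS HT] using raw_nested_ind; constructor.
  - apply smyth_refl_in; auto.
  - apply hoare_refl_in. intros X HX. apply smyth_refl_in; eauto.
Qed.

Lemma le_raw_trans r2 : forall r1 r3, le_raw r1 r2 -> le_raw r2 r3 -> le_raw r1 r3.
Proof.
  induction r2 as [a|S T HS HT] using raw_nested_ind; intros r1 r3 H12 H23.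
  - inversion H12; subst; inversion H23; subst; constructor.
  - inversion H12 as [|S1 T1 ? ? HS12 HT12]; subst.
    inversion H23 as [|? ? S3 T3 HS23 HT23]; subst.
    constructor.
    + apply (smyth_trans_in HS HS23 HS12).
    + apply (hoare_trans_in (l2 := T)); auto.
      intros X HX X1 X3. apply smyth_trans_in. intros x Hx; eauto.
Qed.

Lemma le_subs_refl S : le_subs S S.
Proof. apply smyth_refl_in; auto using le_raw_refl. Qed.

Lemma le_ty_refl T : le_ty T T.
Proof. apply hoare_refl_in; auto using le_subs_refl. Qed.

Lemma le_subs_trans S1 S2 S3 : le_subs S1 S2 -> le_subs S2 S3 -> le_subs S1 S3.
Proof. apply smyth_trans_in; eauto using le_raw_trans. Qed.

Lemma le_ty_trans T1 T2 T3 : le_ty T1 T2 -> le_ty T2 T3 -> le_ty T1 T3.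
Proof. apply hoare_trans_in; eauto using le_subs_trans. Qed.

Lemma le_ty_singleton S S' : le_ty [S] [S'] -> le_subs S S'.
Proof. intros H. destruct (H S (or_introl eq_refl)) as [Y [[<-|[]] HY]]. exact HY. Qed.

Lemma raw_eqv_le_raw r : forall r', raw_eqv r r' -> le_raw r r' /\ le_raw r' r.
Proof.
  induction r as [a|S T HS HT] using raw_nested_ind; intros r' Heqv.
  - inversion Heqv; subst; split; constructor.
  - inversion Heqv as [|? S0 S' ? T0 T' HpS HFS HpT HFT]; subst.
    assert (HS' : perm_Forall2 raw_eqv S S') by (exists S0; auto).
    assert (HT' : perm_Forall2 subs_eqv T T') by (exists T0; auto).
    assert (HX : forall X X', In X T -> subs_eqv X X' ->
                   le_subs X X' /\ le_subs X' X).
    { intros X X' HX HXX'. split.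
      - apply (perm_Forall2_smyth raw_eqv); auto.
        intros x y Hx Hxy. apply (HT X x HX Hx y Hxy).
      - apply (perm_Forall2_hoare raw_eqv (fun x y => le_raw y x)); auto.
        intros x y Hx Hxy. apply (HT X x HX Hx y Hxy). }
    split; constructor.
    + apply (perm_Forall2_hoare raw_eqv (fun x y => le_raw y x)); auto.
      intros x y Hx Hxy. apply (HS x Hx y Hxy).
    + apply (perm_Forall2_hoare subs_eqv); auto. apply HX.
    + apply (perm_Forall2_smyth raw_eqv); auto.
      intros x y Hx Hxy. apply (HS x Hx y Hxy).
    + apply (perm_Forall2_smyth subs_eqv (fun x y => le_subs y x)); auto.
      apply HX.
Qed.

Lemma subs_eqv_le_subs S S' : subs_eqv S S' -> le_subs S S' /\ le_subs S' S.
Proof.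
  intros H. split.
  - apply (perm_Forall2_smyth raw_eqv); auto.
    intros x y _ Hxy. apply (raw_eqv_le_raw _ _ Hxy).
  - apply (perm_Forall2_hoare raw_eqv (fun x y => le_raw y x)); auto.
    intros x y _ Hxy. apply (raw_eqv_le_raw _ _ Hxy).
Qed.

Lemma ty_eqv_le_ty T T' : ty_eqv T T' -> le_ty T T' /\ le_ty T' T.
Proof.
  intros H. split.
  - apply (perm_Forall2_hoare subs_eqv); auto.
    intros X Y _ HXY. apply (subs_eqv_le_subs _ _ HXY).
  - apply (perm_Forall2_smyth subs_eqv (fun X Y => le_subs Y X)); auto.
    intros X Y _ HXY. apply (subs_eqv_le_subs _ _ HXY).
Qed.

Lemma sub_le_ty {ext T T'} : sub ext T T' -> le_ty T T'.
Proof.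
  induction 1 as [a | S S' T T' _ IHS _ IHT | S S' S'' _ IH | S Ss _ IH
                 | T T' T'' _ IH | Ts T _ IH | T1 T1' T2 T2' H1 H2 _ IH | T _
                 | T T' T'' _ _ IH1 _ IH2].
  - apply le_ty_refl.
  - intros X [<-|[]]. exists [Arrow S' T']; split; [now left|].
    intros y [<-|[]]. exists (Arrow S T); split; [now left|].
    constructor; [apply le_ty_singleton|]; assumption.
  - intros X [<-|[]]. exists S'; split; [now left|].
    apply (smyth_incl _ S); [apply incl_appl, incl_refl|].
    apply le_ty_singleton, IH.
  - intros X [<-|[]]. exists (concat Ss); split; [now left|].
    apply smyth_concat_r. intros Si HSi. apply le_ty_singleton, IH, HSi.
  - apply (hoare_incl _ _ T'); [apply incl_appr, incl_refl | exact IH].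
  - apply hoare_concat_l, IH.
  - apply le_ty_trans with T1'; [apply (ty_eqv_le_ty _ _ H1)|].
    apply le_ty_trans with T2'; [exact IH | apply (ty_eqv_le_ty _ _ H2)].
  - apply le_ty_refl.
  - apply le_ty_trans with T'; assumption.
Qed.

Lemma raw_eqv_refl (r : raw A) : raw_eqv r r.
Proof.
  induction r as [a|S T HS HT] using raw_nested_ind.
  - constructor.
  - apply req_arrow with (S0 := S) (T0 := T); auto using Forall2_refl_in.
    apply Forall2_refl_in. intros X HX. exists X; split; auto.
    apply Forall2_refl_in; eauto.
Qed.

Lemma perm_subs_eqv (S S' : subs A) : Permutation S S' -> subs_eqv S S'.
Proof.
  intros H; exists S'; split; auto. apply Forall2_refl_in; auto using raw_eqv_refl.
Qed.

Lemma perm_ty_eqv (T T' : ty A) : Permutation T T' -> ty_eqv T T'.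
Proof.
  intros H; exists T'; split; auto. apply Forall2_refl_in; auto using perm_subs_eqv.
Qed.

Context {ext : bool}.

Lemma sub_interL_in (S : subs A) x y : In x S -> sub ext [[x]] [[y]] -> sub ext [S] [[y]].
Proof.
  intros Hx Hxy. apply in_split in Hx as [l1 [l2 ->]].
  apply sub_conv with (T1' := [[x] ++ (l1 ++ l2)]) (T2' := [[y]]).
  - exists [l1 ++ x :: l2]; split; [reflexivity|].
    constructor; [|constructor]. apply perm_subs_eqv; simpl. symmetry; apply Permutation_middle.
  - apply perm_ty_eqv; reflexivity.
  - apply sub_interL, Hxy.
Qed.

Lemma sub_unionR_in (S Y : subs A) T' : In Y T' -> sub ext [S] [Y] -> sub ext [S] T'.
Proof.
  intros HY HSY. apply in_split in HY as [l1 [l2 ->]].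
  apply sub_conv with (T1' := [S]) (T2' := (l1 ++ l2) ++ [Y]).
  - apply perm_ty_eqv; reflexivity.
  - apply perm_ty_eqv. rewrite <- Permutation_middle. apply Permutation_cons_append.
  - apply sub_unionR, HSY.
Qed.

Lemma sub_of_smyth R (S S' : subs A) :
  (forall x y, In x S -> In y S' -> R x y -> sub ext [[x]] [[y]]) ->
  smyth R S S' -> sub ext [S] [S'].
Proof.
  intros HR H. rewrite <- (concat_map_singleton S'). apply sub_interR.
  intros Si HSi. apply in_map_iff in HSi as [y [<- Hy]].
  destruct (H y Hy) as [x [Hx Hxy]].
  exact (sub_interL_in _ _ _ Hx (HR x y Hx Hy Hxy)).
Qed.

Lemma sub_of_hoare_smyth R (T T' : ty A) :
  (forall X Y x y, In X T -> In Y T' -> In x X -> In y Y -> R x y -> sub ext [[x]] [[y]]) ->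
  hoare (smyth R) T T' -> sub ext T T'.
Proof.
  intros HR H. rewrite <- (concat_map_singleton T). apply sub_unionL.
  intros Ti HTi. apply in_map_iff in HTi as [X [<- HX]].
  destruct (H X HX) as [Y [HY HXY]].
  apply (sub_unionR_in _ _ _ HY), (sub_of_smyth R); eauto.
Qed.

(* Induction on the raw type must handle both orientations at once: in the domain of an arrow the
   inductive hypothesis is needed with the order reversed. *)
Lemma le_raw_sub (r : raw A) : forall r',
  (le_raw r r' -> sub ext [[r]] [[r']]) /\ (le_raw r' r -> sub ext [[r']] [[r]]).
Proof.
  induction r as [a|S T HS HT] using raw_nested_ind; intros r'; split; intros H.
  1, 2: inversion H; constructor.
  all: inversion H as [|S1 T1 S2 T2 HS12 HT12]; subst; apply sub_arrow.
  - apply (sub_of_smyth le_raw); auto. intros x y Hx Hy. apply (HS y Hy x).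
  - apply (sub_of_hoare_smyth le_raw); auto. intros X Y x y HX _ Hx _. apply (HT X x HX Hx y).
  - apply (sub_of_smyth le_raw); auto. intros x y Hx _. apply (HS x Hx y).
  - apply (sub_of_hoare_smyth le_raw); auto. intros X Y x y _ HY _ Hy. apply (HT Y y HY Hy x).
Qed.

Lemma le_ty_sub (T T' : ty A) : le_ty T T' -> sub ext T T'.
Proof.
  apply (sub_of_hoare_smyth le_raw). intros X Y x y _ _ _ _. apply (le_raw_sub x y).
Qed.
End Subtyping.

Theorem lemma3p4 (A : Type) (T T' : ty A) :
  sub true T T' -> sub false T T'.
Proof.
  intros H. apply le_ty_sub, (sub_le_ty H).
Qed.
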